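(* Let $q$ be a prime power with $q\equiv 1\pmod 3$ and $q\geq 7$. If $q$ is odd, then $M(q-1,q-3)\geq (q^2-1)/2$. If $q$ is even, then $M(q-1,q-3)\geq (q-1)(q+2)/3$.
   Context: For permutations $\pi,\sigma$ of a finite set, $hd(\pi,\sigma)$ is the number of points at which they differ. $M(n,d)$ denotes the maximum number of permutations in a set $A$ of permutations of an $n$-element set such that $hd(\pi,\sigma)\geq d$ for all distinct $\pi,\sigma\in A$. *)

From mathcomp Require Import all_boot all_order all_fingroup.
Set Implicit Arguments. Unset Strict Implicit. Unset Printing Implicit Defensive.

Definition hd (T : finType) (pi sigma : {perm T}) : nat :=
  #|[set x : T | pi x != sigma x]|.

Definition perm_code (n d : nat) (A : {set {perm 'I_n}}) : bool :=
  [forall pi in A, forall sigma in A, (pi != sigma) ==> (d <= hd pi sigma)].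

Definition M (n d : nat) : nat :=
  \max_(A : {set {perm 'I_n}} | perm_code d A) #|A|.

Definition prime_power (q : nat) : Prop :=
  exists p k, prime p /\ 0 < k /\ q = p ^ k.

From mathcomp Require Import all_boot all_order all_fingroup ssralg finalg finfield.
From mathcomp Require Import ring zify.

(* Index the q - 1 points by the units of F_q.  For a <> 0 and b, let g_(a,b)
   be x |-> a x + b, except that its pole -b/a (which it would send to 0) is
   sent to b, the value a x + b takes at the missing point 0; this is a
   permutation of F_q^x.  Two distinct such permutations agree at most once
   away from their poles and at most once at each pole, and they agree at both
   poles only when the pairs (a1, b1), (a2, b2) conflict: b1 <> 0,
   a1^2 + a1 a2 + a2^2 = 0 and a1 b1 + a2 b2 = 0.  A conflict-free family of
   pairs is therefore a permutation code of distance q - 3.  Pairs with b = 0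
   never conflict, and each pair conflicts with at most two others (a2 is a
   root of a quadratic and determines b2), so a greedy independent set covers
   a third of the (q - 1)^2 pairs with b <> 0.  For odd q one can take half of
   them instead, since conflicting pairs satisfy a2 b2 = - a1 b1. *)

Set Implicit Arguments. Unset Strict Implicit. Unset Printing Implicit Defensive.
Import GRing.Theory.

Lemma hd_agree (T : finType) (p s : {perm T}) :
  hd p s + #|[set x | p x == s x]| = #|T|.
Proof.
rewrite -(cardsC [set x | p x == s x]) addnC; congr (_ + _).
by apply: eq_card => x; rewrite !inE.
Qed.

Lemma hd_refl (T : finType) (p : {perm T}) : hd p p = 0.
Proof. by apply: eq_card0 => x; rewrite !inE eqxx. Qed.

Section IndependentSet.
Variables (U : finType) (c : rel U).

Definition independent (I : {set U}) : Prop :=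
  {in I &, forall x y, x != y -> ~~ c x y}.

Hypothesis c_sym : symmetric c.
Variable k : nat.
Hypothesis c_deg : forall x, #|[set y | c x y]| <= k.

Lemma exists_large_independent (V : {set U}) :
  exists I : {set U}, [/\ I \subset V, independent I & #|V| <= k.+1 * #|I|].
Proof.
have [n] := ubnP #|V|; elim: n V => // n IHn V ltVn.
have [-> | [x xV]] := set_0Vmem V.
  by exists set0; rewrite sub0set cards0; split => // y z; rewrite inE.
pose N := x |: [set y | c x y].
have subV : V :\: N \subset V :\ x.
  by apply: setDS; rewrite sub1set setU11.
have [|I [sI indI cI]] := IHn (V :\: N).
  by have := subset_leq_card subV; rewrite (cardsD1 x V) xV /= in ltVn *; lia.
have nI y : y \in I -> (y != x) && ~~ c x y.
  by move/(subsetP sI); rewrite !inE negb_or => /andP[].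
have xI : x \notin I by apply/negP => /nI; rewrite eqxx.
exists (x |: I); split.
- by rewrite subUset sub1set xV (subset_trans sI) ?subsetDl.
- move=> y z; rewrite !inE => /predU1P[-> | yI] /predU1P[-> | zI]; rewrite ?eqxx //.
  + by case/andP: (nI z zI).
  + by rewrite c_sym; case/andP: (nI y yI).
  + exact: indI.
- have cN : #|N| <= k.+1 by rewrite cardsU1; have := c_deg x; case: (x \in _); lia.
  have := cardsID N V; have := subset_leq_card (subsetIr V N).
  by rewrite [#|x |: I|]cardsU1 xI; lia.
Qed.

End IndependentSet.

Lemma perm_code_card_leq_M (U : finType) n d (A : {set {perm U}}) :
  #|U| = n -> {in A &, forall p s, p != s -> d <= hd p s} -> #|A| <= M n d.
Proof.
move=> cardU dA.
pose e (x : U) : 'I_n := cast_ord cardU (enum_rank x).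
pose e' (i : 'I_n) : U := enum_val (cast_ord (esym cardU) i).
have eK : cancel e e' by move=> x; rewrite /e /e' cast_ordK enum_rankK.
have e'K : cancel e' e by move=> i; rewrite /e /e' enum_valK cast_ordKV.
have relabel_inj (p : {perm U}) : injective (e \o p \o e').
  by move=> i j /(can_inj eK)/perm_inj/(can_inj e'K).
pose relabel p := perm (relabel_inj p).
have relabelE p x : relabel p (e x) = e (p x) by rewrite permE /= eK.
have hd_relabel p s : hd (relabel p) (relabel s) = hd p s.
  have e'_bij : {on [set x | p x != s x], bijective e'} := onW_bij _ (Bijective e'K eK).
  rewrite /hd -(on_card_preimset e'_bij).
  by apply: eq_card => i; rewrite !inE !permE /= (inj_eq (can_inj eK)).
have relabel_inj_perm : injective relabel.
  by move=> p s eq_ps; apply/permP => x; apply: (can_inj eK); rewrite -!relabelE eq_ps.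
rewrite -(card_imset A relabel_inj_perm).
apply: (@leq_bigmax_cond _ (perm_code d) (fun B => #|B|)).
apply/forallP => p'; apply/implyP => /imsetP[p pA ->].
apply/forallP => s'; apply/implyP => /imsetP[s sA ->].
by apply/implyP => ne; rewrite hd_relabel dA //; apply: contraNneq ne => ->.
Qed.

Section FieldIdentities.
Local Open Scope ring_scope.
Variable R : idomainType.

Lemma quadratic_roots_sum (a r s : R) : r != s ->
  a ^+ 2 + a * r + r ^+ 2 = 0 -> a ^+ 2 + a * s + s ^+ 2 = 0 -> s = - a - r.
Proof.
move=> rs hr hs; have : (r - s) * (r + s + a) = 0.
  transitivity ((a ^+ 2 + a * r + r ^+ 2) - (a ^+ 2 + a * s + s ^+ 2)); first ring.
  by rewrite hr hs subrr.
move/eqP; rewrite mulf_eq0 subr_eq0 (negbTE rs) /= => /eqP vieta.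
by transitivity (- a - r + (r + s + a)); [ring | rewrite vieta addr0].
Qed.

Lemma pole_agreement_identities (a1 a2 b1 b2 x1 x2 : R) : x1 != 0 -> x2 != 0 ->
  a1 * x1 + b1 = 0 -> a2 * x2 + b2 = 0 -> a2 * x1 + b2 = b1 -> a1 * x2 + b1 = b2 ->
  a1 ^+ 2 + a1 * a2 + a2 ^+ 2 = 0 /\ a1 * b1 + a2 * b2 = 0.
Proof.
move=> x1_0 x2_0 h1 h2 h3 h4.
pose u := (a1 + a2) * x1 - a2 * x2; pose v := (a1 + a2) * x2 - a1 * x1.
have u0 : u = 0.
  transitivity ((a2 * x1 + b2 - b1) + (a1 * x1 + b1) - (a2 * x2 + b2)).
    by rewrite /u; ring.
  by rewrite h1 h2 h3 subrr; ring.
have v0 : v = 0.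
  transitivity ((a1 * x2 + b1 - b2) + (a2 * x2 + b2) - (a1 * x1 + b1)).
    by rewrite /v; ring.
  by rewrite h1 h2 h4 subrr; ring.
have q0 : a1 ^+ 2 + a1 * a2 + a2 ^+ 2 = 0.
  have : x1 * x2 * (a1 ^+ 2 + a1 * a2 + a2 ^+ 2) = a1 * x1 * u + a2 * x2 * v + u * v.
    by rewrite /u /v; ring.
  rewrite u0 v0 !mulr0 !addr0 => /eqP; rewrite !mulf_eq0 (negbTE x1_0) (negbTE x2_0).
  by move/eqP.
split=> //.
transitivity (a1 * (a1 * x1 + b1) + a2 * (a2 * x2 + b2)
              - x1 * (a1 ^+ 2 + a1 * a2 + a2 ^+ 2) + a2 * u); first by rewrite /u; ring.
by rewrite h1 h2 q0 u0; ring.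
Qed.

End FieldIdentities.

Section Construction.
Local Open Scope ring_scope.
Variable F : finFieldType.

Definition Fx : Type := {x : F | x != 0}.

Lemma card_Fx : #|{: Fx}| = (#|F|).-1.
Proof. by rewrite card_sig; exact: cardC1. Qed.

Definition pole (P : Fx * F) : {set Fx} :=
  [set x : Fx | val P.1 * val x + P.2 == 0].

Definition gval (P : Fx * F) (x : Fx) : F :=
  if x \in pole P then P.2 else val P.1 * val x + P.2.

Lemma gval_pole P x : x \in pole P -> gval P x = P.2.
Proof. by rewrite /gval => ->. Qed.

Lemma gval_nopole P x : x \notin pole P -> gval P x = val P.1 * val x + P.2.
Proof. by rewrite /gval => /negbTE ->. Qed.

Lemma mulFx_neq0 (a x : Fx) : val a * val x != 0.
Proof. by rewrite mulf_neq0 ?(valP a) ?(valP x). Qed.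

Lemma card_pole_le1 P : (#|pole P| <= 1)%N.
Proof.
apply/card_le1_eqP => x y; rewrite !inE => /eqP hx /eqP hy.
by apply: val_inj; apply: (mulfI (valP P.1)); apply: (addIr P.2); rewrite hx hy.
Qed.

Lemma gval_neq0 P x : gval P x != 0.
Proof.
have [xP | xnP] := boolP (x \in pole P); last first.
  by rewrite gval_nopole //; rewrite inE in xnP.
rewrite gval_pole //; apply: contraTneq xP; rewrite inE => ->.
by rewrite addr0 mulFx_neq0.
Qed.

Lemma gval_inj P : injective (gval P).
Proof.
have pole_regular x y : x \in pole P -> y \notin pole P -> gval P x != gval P y.
  move=> xP ynP; rewrite gval_pole // gval_nopole //.
  by rewrite eq_sym -subr_eq0 addrK mulFx_neq0.
move=> x y; have [xP | xnP] := boolP (x \in pole P);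
  have [yP | ynP] := boolP (y \in pole P).
- by move=> _; move/card_le1_eqP: (card_pole_le1 P); apply.
- by move/eqP; rewrite (negbTE (pole_regular _ _ xP ynP)).
- by move/esym/eqP; rewrite (negbTE (pole_regular _ _ yP xnP)).
- rewrite !gval_nopole // => /addIr /(mulfI (valP P.1)); exact: val_inj.
Qed.

Definition gfun (P : Fx * F) (x : Fx) : Fx := exist _ (gval P x) (gval_neq0 P x).

Lemma gfun_inj P : injective (gfun P).
Proof. by move=> x y /(congr1 val) /gval_inj. Qed.

Definition gperm (P : Fx * F) : {perm Fx} := perm (@gfun_inj P).

Lemma gpermE P x : val (gperm P x) = gval P x.
Proof. by rewrite permE. Qed.

Definition agree (P Q : Fx * F) : {set Fx} := [set x | gperm P x == gperm Q x].

Lemma in_agree P Q x : (x \in agree P Q) = (gval P x == gval Q x).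
Proof. by rewrite inE -val_eqE /= !gpermE. Qed.

Lemma agreeC P Q : agree P Q = agree Q P.
Proof. by apply/setP => x; rewrite !inE eq_sym. Qed.

Lemma pair_Fx_eq (P Q : Fx * F) : val P.1 = val Q.1 -> P.2 = Q.2 -> P = Q.
Proof. by case: P Q => [a b] [a' b'] /= /val_inj -> ->. Qed.

Lemma agree_pole P Q x : P != Q -> x \in pole P -> x \in agree P Q ->
  val Q.1 * val x + Q.2 = P.2.
Proof.
move=> PQ xP; rewrite in_agree gval_pole // => /eqP eP.
have [xQ | xnQ] := boolP (x \in pole Q); last by rewrite eP gval_nopole.
rewrite gval_pole // in eP; move: xP xQ; rewrite !inE eP => /eqP hP /eqP hQ.
case/eqP: PQ; apply: pair_Fx_eq eP; apply: (mulIf (valP x)).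
by apply: (addIr Q.2); rewrite hP hQ.
Qed.

Lemma card_agree_nopoles P Q : P != Q ->
  (#|[set x in agree P Q | (x \notin pole P) && (x \notin pole Q)]| <= 1)%N.
Proof.
have affine z : z \in agree P Q -> z \notin pole P -> z \notin pole Q ->
    (val P.1 - val Q.1) * val z = Q.2 - P.2.
  rewrite in_agree => /eqP e zP zQ; move: e; rewrite !gval_nopole // => e.
  transitivity ((val P.1 * val z + P.2) - (val Q.1 * val z + Q.2) + (Q.2 - P.2)).
    by ring.
  by rewrite e subrr add0r.
move=> PQ; apply/card_le1_eqP => x y.
move=> /setIdP[/affine hx /andP[/hx {}hx /hx {}hx]].
move=> /setIdP[/affine hy /andP[/hy {}hy /hy {}hy]].
have [ea | nea] := eqVneq (val P.1) (val Q.1).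
  case/eqP: PQ; apply: pair_Fx_eq => //; apply/eqP.
  by rewrite eq_sym -subr_eq0 -hx ea subrr mul0r.
by apply: val_inj; apply: (mulfI (_ : val P.1 - val Q.1 != 0)); rewrite ?subr_eq0 ?hx ?hy.
Qed.

Definition conflict (P Q : Fx * F) : bool :=
  [&& P.2 != 0, val P.1 ^+ 2 + val P.1 * val Q.1 + val Q.1 ^+ 2 == 0
    & val P.1 * P.2 + val Q.1 * Q.2 == 0].

Lemma conflict_of_agree_poles P Q x1 x2 : P != Q -> x1 \in pole P -> x2 \in pole Q ->
  x1 \in agree P Q -> x2 \in agree P Q -> conflict P Q.
Proof.
move=> PQ x1P x2Q a1 a2.
have h3 := agree_pole PQ x1P a1.
have h4 : val P.1 * val x2 + P.2 = Q.2.
  by apply: agree_pole x2Q _; rewrite 1?eq_sym // agreeC.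
move: x1P x2Q; rewrite !inE => /eqP h1 /eqP h2.
have [q0 l0] := pole_agreement_identities (valP x1) (valP x2) h1 h2 h3 h4.
rewrite /conflict q0 l0 !eqxx !andbT.
by apply/eqP => b0; move/eqP: h1; rewrite b0 addr0 (negbTE (mulFx_neq0 _ _)).
Qed.

Lemma card_agree_le2 P Q : P != Q -> ~~ conflict P Q -> (#|agree P Q| <= 2)%N.
Proof.
move=> PQ nc; set E := agree P Q.
have one_empty : (E :&: pole P == set0) || (E :&: pole Q == set0).
  apply: contraR nc => /norP[/set0Pn[x1 /setIP[x1E x1P]] /set0Pn[x2 /setIP[x2E x2Q]]].
  exact: conflict_of_agree_poles x1P x2Q x1E x2E.
have cover : E \subset (E :&: pole P) :|: (E :&: pole Q)
                       :|: [set x in E | (x \notin pole P) && (x \notin pole Q)].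
  apply/subsetP => x xE; rewrite !in_setU !in_setI in_set xE /=.
  by case: (x \in pole P); case: (x \in pole Q).
apply: leq_trans (subset_leq_card cover) _; apply: leq_trans (leq_card_setU _ _) _.
rewrite -[2%N]/(1 + 1)%N leq_add ?card_agree_nopoles //.
by case/orP: one_empty => /eqP->; rewrite ?set0U ?setU0;
  apply: leq_trans (subset_leq_card (subsetIr _ _)) (card_pole_le1 _).
Qed.

Lemma hd_gperm P Q : P != Q -> ~~ conflict P Q ->
  ((#|F|).-1 - 2 <= hd (gperm P) (gperm Q))%N.
Proof.
move=> PQ nc; have := hd_agree (gperm P) (gperm Q); rewrite card_Fx.
by have := card_agree_le2 PQ nc; rewrite /agree; lia.
Qed.

Lemma conflict_sym : symmetric conflict.
Proof.
suff imp P Q : conflict P Q -> conflict Q P by move=> P Q; apply/idP/idP; apply: imp.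
case/and3P=> b1 /eqP q /eqP l; apply/and3P; split.
- apply/eqP => b2; move/eqP: l; rewrite b2 mulr0 addr0 mulf_eq0.
  by rewrite (negbTE (valP P.1)) (negbTE b1).
- by apply/eqP; rewrite -[RHS]q; ring.
- by rewrite addrC l.
Qed.

Lemma card_quadratic_roots (a : F) :
  (#|[set t : F | (a ^+ 2 + a * t + t ^+ 2 == 0)%R]| <= 2)%N.
Proof.
set S := [set t | _]; have [-> | [r rS]] := set_0Vmem S; first by rewrite cards0.
rewrite (cardsD1 r) rS ltnS -(cards1 (- a - r)).
apply/subset_leq_card/subsetP => s; rewrite !inE => /andP[sr /eqP hs]; rewrite inE in rS.
by apply/eqP; apply: quadratic_roots_sum (eqP rS) hs; rewrite eq_sym.
Qed.

Lemma card_conflict_le2 P : (#|[set Q | conflict P Q]| <= 2)%N.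
Proof.
have val1_inj : {in [set Q | conflict P Q] &, injective (fun Q => val Q.1)}.
  move=> Q Q'; rewrite !inE => /and3P[_ _ /eqP l] /and3P[_ _ /eqP l'] e.
  apply: (pair_Fx_eq e); apply: (mulfI (valP Q.1)); apply: (addrI (val P.1 * P.2)).
  by rewrite l e l'.
rewrite -(card_in_imset val1_inj); apply: leq_trans (card_quadratic_roots (val P.1)).
by apply/subset_leq_card/subsetP => t /imsetP[Q]; rewrite !inE => /and3P[_ q _] ->.
Qed.

Lemma independent_card_leq_M (Sel : {set Fx * F}) : (4 <= #|F|)%N ->
  independent conflict Sel -> (#|Sel| <= M (#|F|).-1 ((#|F|).-1 - 2))%N.
Proof.
move=> q4 indS.
have dist : {in Sel &, forall P Q, P != Q -> (#|F|).-1 - 2 <= hd (gperm P) (gperm Q)}%N.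
  by move=> P Q PS QS PQ; apply: hd_gperm PQ (indS P Q PS QS PQ).
have gperm_inj : {in Sel &, injective gperm}.
  move=> P Q PS QS e; apply: contraTeq q4 => PQ.
  by have := dist P Q PS QS PQ; rewrite e hd_refl; lia.
rewrite -(card_in_imset gperm_inj); apply: perm_code_card_leq_M card_Fx _.
move=> _ _ /imsetP[P PS ->] /imsetP[Q QS ->] ne; apply: dist => //.
by apply: contraNneq ne => ->.
Qed.

Definition zero_pairs : {set Fx * F} := [set P : Fx * F | P.2 == 0].

Lemma card_zero_pairs : #|zero_pairs| = (#|F|).-1.
Proof.
have -> : zero_pairs = setX [set: Fx] [set 0].
  by apply/setP => -[a b]; rewrite !inE.
by rewrite cardsX cardsT cards1 muln1 card_Fx.
Qed.

Lemma card_nonzero_pairs : #|~: zero_pairs| = ((#|F|).-1 * (#|F|).-1)%N.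
Proof.
have -> : ~: zero_pairs = setX [set: Fx] [set~ 0].
  by apply/setP => -[a b]; rewrite !inE.
by rewrite cardsX cardsT cardsC1 card_Fx.
Qed.

Lemma card_zero_pairsU (I : {set Fx * F}) : I \subset ~: zero_pairs ->
  #|zero_pairs :|: I| = ((#|F|).-1 + #|I|)%N.
Proof.
move=> sI; rewrite cardsU card_zero_pairs.
suff -> : zero_pairs :&: I = set0 by rewrite cards0 subn0.
apply/setP => P; rewrite !inE; apply/negP => /andP[/eqP b0 /(subsetP sI)].
by rewrite !inE b0 eqxx.
Qed.

Lemma independent_zero_pairsU (I : {set Fx * F}) :
  independent conflict I -> independent conflict (zero_pairs :|: I).
Proof.
have zero_free P Q : P \in zero_pairs -> ~~ conflict P Q.
  by rewrite inE => /eqP b0; rewrite /conflict b0 eqxx.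
move=> indI P Q /setUP[PZ | PI] /setUP[QZ | QI] PQ; try exact: zero_free.
- by rewrite conflict_sym zero_free.
- exact: indI.
Qed.

Lemma even_bound : (4 <= #|F|)%N ->
  ((#|F|).-1 * (#|F|).-1 + 3 * (#|F|).-1 <= 3 * M (#|F|).-1 ((#|F|).-1 - 2))%N.
Proof.
move=> q4.
have [I [sI indI cI]] :=
  exists_large_independent conflict_sym card_conflict_le2 (~: zero_pairs).
have := independent_card_leq_M q4 (independent_zero_pairsU indI).
rewrite card_zero_pairsU //; move: cI; rewrite card_nonzero_pairs.
set m := M _ _; set q := #|F|.-1; set i := #|I|; nia.
Qed.

(* One element out of each pair {c, - c}. *)
Definition half : {set F} := [set c : F | enum_rank c < enum_rank (- c)]%N.

Lemma half0 : 0 \notin half.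
Proof. by rewrite inE oppr0 ltnn. Qed.

Lemma half_opp c : c \in half -> - c \notin half.
Proof. by rewrite !inE opprK => h; rewrite ltnNge ltnW. Qed.

Lemma half_or_opp c : 2 != 0 :> F -> c != 0 -> (c \in half) || (- c \in half).
Proof.
move=> two0 c0; have c_opp : c != - c by rewrite -addr_eq0 -mulr2n -mulr_natr mulf_neq0.
rewrite !inE opprK; case: ltngtP => // /val_inj/enum_rank_inj eq_c.
by rewrite {1}eq_c eqxx in c_opp.
Qed.

Lemma odd_bound : (4 <= #|F|)%N -> 2 != 0 :> F ->
  ((#|F|).-1 * (#|F|).-1 + 2 * (#|F|).-1 <= 2 * M (#|F|).-1 ((#|F|).-1 - 2))%N.
Proof.
move=> q4 two0; set H := [set P : Fx * F | val P.1 * P.2 \in half].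
have inH P : (P \in H) = (val P.1 * P.2 \in half) by rewrite inE.
have indH : independent conflict H.
  move=> P Q; rewrite !inH => hP hQ _; apply/negP => /and3P[_ _ l].
  have e : val Q.1 * Q.2 = - (val P.1 * P.2) by apply/eqP; rewrite -addr_eq0 addrC.
  by move: hQ; rewrite e (negbTE (half_opp hP)).
have sH : H \subset ~: zero_pairs.
  apply/subsetP => P; rewrite inH in_setC; apply: contraTN.
  by rewrite [_ \in zero_pairs]inE => /eqP ->; rewrite mulr0 half0.
pose neg2 (P : Fx * F) := (P.1, - P.2).
have neg2_inj : injective neg2 by move=> [a b] [a' b'] [-> /oppr_inj ->].
have split_nz : ~: zero_pairs = H :|: neg2 @^-1: H.
  apply/setP => -[a b]; rewrite in_setU [_ \in neg2 @^-1: H]inE !inH /= mulrN.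
  rewrite in_setC [_ \in zero_pairs]inE /=.
  apply/idP/idP => [b0 | /orP[] h]; first by rewrite half_or_opp ?mulf_neq0 ?(valP a).
    by apply: contraTneq h => ->; rewrite mulr0 half0.
  by apply: contraTneq h => ->; rewrite mulr0 oppr0 half0.
have disjoint_neg2 : H :&: neg2 @^-1: H = set0.
  apply/setP => -[a b]; rewrite in_setI [_ \in neg2 @^-1: H]inE !inH /= mulrN in_set0.
  by apply/negP => /andP[/half_opp/negP].
have := cardsUI H (neg2 @^-1: H).
rewrite -split_nz disjoint_neg2 cards0 card_preimset // card_nonzero_pairs.
have := independent_card_leq_M q4 (independent_zero_pairsU indH).
rewrite card_zero_pairsU //; set m := M _ _; set q := #|F|.-1; set h := #|H|; nia.
Qed.

End Construction.

Theorem corollary7 (q : nat) :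
  prime_power q -> q %% 3 = 1 -> 7 <= q ->
  (odd q -> (q ^ 2 - 1) %/ 2 <= M (q - 1) (q - 3)) /\
  (~~ odd q -> ((q - 1) * (q + 2)) %/ 3 <= M (q - 1) (q - 3)).
Proof.
(* The construction does not need q = 1 (mod 3). *)
move=> [p [k [p_pr [k_gt0 ->]]]] _ q7.
have [F pF cardF] := pPrimePowerField p_pr k_gt0.
rewrite -cardF in q7 *.
have q4 : 4 <= #|F| by lia.
have -> : #|F| - 1 = #|F|.-1 by rewrite subn1.
have -> : #|F| - 3 = #|F|.-1 - 2 by lia.
split=> [odd_q | _].
- have two0 : (2 != 0 :> F)%R.
    apply: contraTneq odd_q => /eqP two0; have /eqP p2 : p == 2.
      by rewrite -dvdn_prime2 // (dvdn_pcharf pF).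
    by rewrite cardF p2 oddX orbF -lt0n k_gt0.
  rewrite -[M _ _](mulKn _ (isT : 0 < 2)); apply: leq_div2r.
  by have := odd_bound q4 two0; nia.
- rewrite -[M _ _](mulKn _ (isT : 0 < 3)); apply: leq_div2r.
  by have := even_bound q4; nia.
Qed.
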